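(* For all integers $n\ge0$, $p\ge1$ and every real $x$, $$\mathcal{B}_{n,p}(x)=p\int_0^1(1-t)^{p-1}G_{n,x}(t)\,dt,\qquad\text{where } G_{n,x}(t)=\sum_{k=0}^{n}\binom{n}{k}\phi_k(t)\,x^{n-k}.$$
   Context: $S(n,k)$ denotes the Stirling numbers of the second kind and $\phi_n(t)=\sum_{k=0}^nS(n,k)t^k$ the Bell (exponential) polynomials; thus $\sum_{n\ge0}G_{n,x}(t)\frac{z^n}{n!}=\exp(xz+t(e^z-1))$. For an integer $p\ge0$, the $p$-Bell numbers $\mathcal{B}_{n,p}$ are defined by $\sum_{n\ge0}\mathcal{B}_{n,p}\frac{z^n}{n!}=\sum_{n\ge0}\binom{n+p}{p}^{-1}\frac{(e^z-1)^n}{n!}$, and the $p$-Bell polynomials by $\mathcal{B}_{n,p}(x)=\sum_{k=0}^n\binom nk\mathcal{B}_{k,p}x^{n-k}$ (equivalently $\sum_n\mathcal{B}_{n,p}(x)\frac{z^n}{n!}=e^{xz}\sum_{n}\mathcal{B}_{n,p}\frac{z^n}{n!}$). *)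

From Stdlib Require Import Reals.
From Coquelicot Require Import Coquelicot.
Open Scope R_scope.

Fixpoint stirling2 (n k : nat) : nat :=
  match n, k with
  | O, O => 1%nat
  | O, S _ => 0%nat
  | S _, O => 0%nat
  | S n', S k' => (S k' * stirling2 n' (S k') + stirling2 n' k')%nat
  end.

Definition bell_poly (n : nat) (t : R) : R :=
  sum_f_R0 (fun k => INR (stirling2 n k) * t ^ k) n.

Definition G (n : nat) (x t : R) : R :=
  sum_f_R0 (fun k => Binomial.C n k * bell_poly k t * x ^ (n - k)) n.

(* p-Bell numbers: n! [z^n] sum_k C(k+p,p)^{-1} (e^z-1)^k/k!.
   Since (e^z-1)^k/k! = sum_n S(n,k) z^n/n! (with S(n,k)=0 for k>n),
   the coefficient is B_{n,p} = sum_{k=0}^n S(n,k) / C(k+p,p). *)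
Definition pBell (n p : nat) : R :=
  sum_f_R0 (fun k => INR (stirling2 n k) / Binomial.C (k + p) p) n.

Definition pBell_poly (n p : nat) (x : R) : R :=
  sum_f_R0 (fun k => Binomial.C n k * pBell k p * x ^ (n - k)) n.

(** Expanding [G_{n,x}] and [phi_k] reduces the identity, by linearity of the
    integral, to the Beta integral
    [p * int_0^1 (1-t)^(p-1) t^k dt = k! p! / (k+p)! = 1 / C(k+p,p)],
    which is exactly the weight of [S(k,j)] in the p-Bell numbers. The Beta
    integral itself follows from [int_0^1 (1-t)^q dt = 1/(q+1)] by repeated
    integration by parts. *)

From Stdlib Require Import Reals Factorial Lia.
From Coquelicot Require Import Coquelicot.
Open Scope R_scope.

Lemma is_RInt_sum_f_R0 (f : nat -> R -> R) (v : nat -> R) (a b : R) (N : nat) :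
  (forall k, is_RInt (f k) a b (v k)) ->
  is_RInt (fun t => sum_f_R0 (fun k => f k t) N) a b (sum_f_R0 v N).
Proof.
  intro Hf; induction N as [|N IH]; simpl.
  - apply Hf.
  - exact (is_RInt_plus _ _ _ _ _ _ IH (Hf (S N))).
Qed.

Lemma is_RInt_mult_sum_f_R0 (w : R -> R) (f : nat -> R -> R) (c v : nat -> R)
    (a b : R) (N : nat) :
  (forall k, is_RInt (fun t => w t * f k t) a b (v k)) ->
  is_RInt (fun t => w t * sum_f_R0 (fun k => c k * f k t) N) a b
    (sum_f_R0 (fun k => c k * v k) N).
Proof.
  intro Hf.
  apply (is_RInt_ext (fun t => sum_f_R0 (fun k => c k * (w t * f k t)) N)).
  - intros t _; rewrite scal_sum; apply sum_eq; intros k _; ring.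
  - apply is_RInt_sum_f_R0; intro k.
    exact (is_RInt_scal _ _ _ _ _ (Hf k)).
Qed.

Lemma is_RInt_pow_one_minus (q : nat) :
  is_RInt (fun t => (1 - t) ^ q) 0 1 (/ INR (S q)).
Proof.
  assert (Hq : INR (S q) <> 0) by (apply not_0_INR; lia).
  set (F := fun t => - (1 - t) ^ S q / INR (S q)).
  assert (HF : is_RInt (fun t => (1 - t) ^ q) 0 1 (F 1 - F 0)).
  { apply (is_RInt_derive F).
    - intros t _; unfold F; auto_derive; [easy|].
      change (match q with O => 1 | S _ => INR q + 1 end) with (INR (S q)).
      simpl pred; replace (1 + - t) with (1 - t) by ring.
      field; exact Hq.
    - intros t _; apply (@ex_derive_continuous R_AbsRing R_NormedModule).
      auto_derive; easy. }
  replace (/ INR (S q)) with (F 1 - F 0); [exact HF|].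
  unfold F; rewrite Rminus_diag, Rminus_0_r, pow1, pow_i by lia.
  field; exact Hq.
Qed.

Lemma is_RInt_beta_step (k q : nat) (v : R) :
  is_RInt (fun t => t ^ k * (1 - t) ^ S q) 0 1 v ->
  is_RInt (fun t => t ^ S k * (1 - t) ^ q) 0 1 (INR (S k) / INR (S q) * v).
Proof.
  intro Hv.
  assert (Hq : INR (S q) <> 0) by (apply not_0_INR; lia).
  set (F := fun t => t ^ S k * (1 - t) ^ S q).
  set (dF := fun t => INR (S k) * (t ^ k * (1 - t) ^ S q)
                      - INR (S q) * (t ^ S k * (1 - t) ^ q)).
  assert (HF : is_RInt dF 0 1 (F 1 - F 0)).
  { apply (is_RInt_derive F).
    - intros t _; unfold F, dF; auto_derive; [easy|].
      change (match q with O => 1 | S _ => INR q + 1 end) with (INR (S q)).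
      change (match k with O => 1 | S _ => INR k + 1 end) with (INR (S k)).
      replace (1 + - t) with (1 - t) by ring; simpl pow; ring.
    - intros t _; apply (@ex_derive_continuous R_AbsRing R_NormedModule).
      unfold dF; auto_derive; easy. }
  (* [F] vanishes at both ends, so the two terms of [dF] have equal integrals. *)
  assert (HF0 : F 1 - F 0 = 0).
  { unfold F; rewrite Rminus_diag, !pow_i by lia; ring. }
  replace (INR (S k) / INR (S q) * v)
    with (/ INR (S q) * (INR (S k) * v - (F 1 - F 0)))
    by (rewrite HF0; field; exact Hq).
  apply (is_RInt_ext (fun t => / INR (S q) * (INR (S k) * (t ^ k * (1 - t) ^ S q) - dF t))).
  - intros t _; unfold dF; cbn; field; exact Hq.
  - exact (is_RInt_scal _ _ _ _ _
             (is_RInt_minus _ _ _ _ _ _ (is_RInt_scal _ _ _ (INR (S k)) _ Hv) HF)).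
Qed.

Lemma is_RInt_beta (k q : nat) :
  is_RInt (fun t => t ^ k * (1 - t) ^ q) 0 1
    (INR (fact k) * INR (fact q) / INR (fact (k + q + 1))).
Proof.
  revert q; induction k as [|k IH]; intro q.
  - apply (is_RInt_ext (fun t => (1 - t) ^ q)); [intros t _; simpl; ring|].
    replace (INR (fact 0) * INR (fact q) / INR (fact (0 + q + 1)))
      with (/ INR (S q)); [exact (is_RInt_pow_one_minus q)|].
    rewrite Nat.add_0_l, Nat.add_1_r, fact_simpl, mult_INR; change (INR (fact 0)) with 1.
    assert (INR (S q) <> 0) by (apply not_0_INR; lia).
    pose proof (INR_fact_neq_0 q).
    field; split; assumption.
  - replace (INR (fact (S k)) * INR (fact q) / INR (fact (S k + q + 1)))
      with (INR (S k) / INR (S q)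
            * (INR (fact k) * INR (fact (S q)) / INR (fact (k + S q + 1)))).
    + apply is_RInt_beta_step, IH.
    + replace (k + S q + 1)%nat with (S k + q + 1)%nat by lia.
      rewrite !fact_simpl, !mult_INR.
      assert (INR (S q) <> 0) by (apply not_0_INR; lia).
      pose proof (INR_fact_neq_0 (S k + q + 1)).
      field; split; assumption.
Qed.

Lemma is_RInt_binomial_weight (p k : nat) : (1 <= p)%nat ->
  is_RInt (fun t => (1 - t) ^ (p - 1) * t ^ k) 0 1
    (/ (INR p * Binomial.C (k + p) p)).
Proof.
  intro Hp; destruct p as [|q]; [lia|].
  replace (S q - 1)%nat with q by lia.
  apply (is_RInt_ext (fun t => t ^ k * (1 - t) ^ q)); [intros t _; simpl; ring|].
  replace (/ (INR (S q) * Binomial.C (k + S q) (S q)))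
    with (INR (fact k) * INR (fact q) / INR (fact (k + q + 1)));
    [apply is_RInt_beta|].
  unfold Binomial.C.
  replace (k + S q - S q)%nat with k by lia.
  replace (k + q + 1)%nat with (k + S q)%nat by lia.
  rewrite (fact_simpl q), mult_INR.
  assert (INR (S q) <> 0) by (apply not_0_INR; lia).
  pose proof (INR_fact_neq_0 q); pose proof (INR_fact_neq_0 k).
  pose proof (INR_fact_neq_0 (k + S q)).
  field; repeat split; assumption.
Qed.

Lemma is_RInt_bell_poly (p k : nat) : (1 <= p)%nat ->
  is_RInt (fun t => (1 - t) ^ (p - 1) * bell_poly k t) 0 1 (pBell k p / INR p).
Proof.
  intro Hp.
  assert (INR p <> 0) by (apply not_0_INR; lia).
  unfold bell_poly.
  replace (pBell k p / INR p) with
    (sum_f_R0 (fun j => INR (stirling2 k j) * / (INR p * Binomial.C (j + p) p)) k).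
  - apply is_RInt_mult_sum_f_R0; intro j.
    now apply is_RInt_binomial_weight.
  - unfold pBell, Rdiv; rewrite Rmult_comm, scal_sum.
    apply sum_eq; intros j _.
    rewrite Rinv_mult; ring.
Qed.

Lemma is_RInt_G (n p : nat) (x : R) : (1 <= p)%nat ->
  is_RInt (fun t => (1 - t) ^ (p - 1) * G n x t) 0 1 (pBell_poly n p x / INR p).
Proof.
  intro Hp.
  apply (is_RInt_ext (fun t => (1 - t) ^ (p - 1) *
           sum_f_R0 (fun k => Binomial.C n k * x ^ (n - k) * bell_poly k t) n)).
  { intros t _; unfold G; f_equal; apply sum_eq; intros k _; ring. }
  replace (pBell_poly n p x / INR p) with
    (sum_f_R0 (fun k => Binomial.C n k * x ^ (n - k) * (pBell k p / INR p)) n).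
  - apply is_RInt_mult_sum_f_R0; intro k.
    now apply is_RInt_bell_poly.
  - unfold pBell_poly, Rdiv; rewrite Rmult_comm, scal_sum.
    apply sum_eq; intros k _; ring.
Qed.

Theorem mainTheorem15 (n p : nat) (x : R) :
  (1 <= p)%nat ->
  pBell_poly n p x =
  INR p * RInt (fun t => (1 - t) ^ (p - 1) * G n x t) 0 1.
Proof.
  intro Hp.
  rewrite (is_RInt_unique _ _ _ _ (is_RInt_G n p x Hp)).
  field; apply not_0_INR; lia.
Qed.
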